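(* Let $\alpha\in[0,1)$ and let $X_1,\dots,X_N$ be independent random variables with $X_i\sim\operatorname{Ber}(p_i,s_i)$, $p_i\in[0,1]$, $0<s_i\le 1$. If $B=\sum_{i=1}^N X_i$ satisfies $\mathbb{P}(B>1)\le\alpha$, then $\mathbb{E}(B)\le\frac{1+\alpha}{1-\alpha}$.
   Context: $X\sim\operatorname{Ber}(p,s)$ means $X=s$ with probability $p$ and $X=0$ with probability $1-p$. *)

From mathcomp Require Import all_boot all_order all_algebra.
Set Implicit Arguments. Unset Strict Implicit. Unset Printing Implicit Defensive.
Import Order.TTheory GRing.Theory Num.Theory.
Local Open Scope ring_scope.

(* Sample space: outcomes w : {ffun 'I_N -> bool}; w i = true means X_i = s_i,
   w i = false means X_i = 0.  The product measure below makes the X_i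
   independent with X_i ~ Ber(p_i, s_i). *)
Definition ber_prob (R : nzRingType) (N : nat) (p : 'I_N -> R)
  (w : {ffun 'I_N -> bool}) : R :=
  \prod_(i < N) (if w i then p i else 1 - p i).

Definition ber_X (R : nzRingType) (N : nat) (s : 'I_N -> R)
  (w : {ffun 'I_N -> bool}) (i : 'I_N) : R :=
  if w i then s i else 0.

Definition ber_B (R : nzRingType) (N : nat) (s : 'I_N -> R)
  (w : {ffun 'I_N -> bool}) : R :=
  \sum_(i < N) ber_X s w i.

Definition prob_B_gt1 (R : numDomainType) (N : nat) (p s : 'I_N -> R) : R :=
  \sum_(w : {ffun 'I_N -> bool} | 1 < ber_B s w) ber_prob p w.

Definition expect_B (R : nzRingType) (N : nat) (p s : 'I_N -> R) : R :=
  \sum_(w : {ffun 'I_N -> bool}) ber_prob p w * ber_B s w.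

From mathcomp Require Import all_boot all_order all_algebra.
From mathcomp Require Import ring lra.
Set Implicit Arguments. Unset Strict Implicit.
Import Order.TTheory GRing.Theory Num.Theory.
Local Open Scope ring_scope.

(* Write q = P(B > 1) and B_i = B - X_i.  Since 0 <= X_i <= 1, pointwise
   B <= 1 + 1[B > 1] + sum_i X_i 1[B_i > 1]: if B > 2 every B_i exceeds 1.
   Because X_i is independent of B_i, E(X_i 1[B_i > 1]) = p_i s_i P(B_i > 1)
   <= p_i s_i q, so taking expectations gives E(B) <= 1 + q + E(B) q, i.e.
   E(B) <= (1 + q) / (1 - q) <= (1 + alpha) / (1 - alpha). *)

Local Notation outcome N := {ffun 'I_N -> bool}.

Definition flip N (i : 'I_N) (w : outcome N) : outcome N :=
  [ffun j => if j == i then ~~ w i else w j].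

Lemma flipK N (i : 'I_N) : involutive (flip i).
Proof.
move=> w; apply/ffunP=> j; rewrite !ffunE.
by case: eqP => [->|//]; rewrite eqxx negbK.
Qed.

Lemma flip_id N (i : 'I_N) w : flip i w i = ~~ w i.
Proof. by rewrite ffunE eqxx. Qed.

Lemma flip_neq N (i j : 'I_N) w : j != i -> flip i w j = w j.
Proof. by rewrite ffunE => /negPf ->. Qed.

Lemma sum_flip_invariant (V : nmodType) N (i : 'I_N)
    (K : outcome N -> V) :
  (forall w, K (flip i w) = K w) ->
  \sum_(w : outcome N | ~~ w i) K w = \sum_(w : outcome N | w i) K w.
Proof.
move=> K_flip; rewrite (reindex_inj (can_inj (flipK i))) /=.
by apply: eq_big => w; rewrite ?flip_id ?negbK ?K_flip.
Qed.

Section Expectation.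

Variables (R : comNzRingType) (N : nat) (p s : 'I_N -> R).

Definition ber_expect (f : outcome N -> R) : R :=
  \sum_w ber_prob p w * f w.

Definition ber_prob_except (i : 'I_N) w :=
  \prod_(j | j != i) (if w j then p j else 1 - p j).

Definition ber_B_except (i : 'I_N) w := \sum_(j | j != i) ber_X s w j.

Lemma ber_probD1 i w :
  ber_prob p w = (if w i then p i else 1 - p i) * ber_prob_except i w.
Proof. by rewrite /ber_prob (bigD1 i). Qed.

Lemma ber_BD1 i w : ber_B s w = ber_X s w i + ber_B_except i w.
Proof. by rewrite /ber_B (bigD1 i). Qed.

Lemma ber_prob_except_flip i w : ber_prob_except i (flip i w) = ber_prob_except i w.
Proof. by apply: eq_bigr => j ji; rewrite flip_neq. Qed.

Lemma ber_B_except_flip i w : ber_B_except i (flip i w) = ber_B_except i w.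
Proof. by apply: eq_bigr => j ji; rewrite /ber_X flip_neq. Qed.

Lemma ber_expect1 : ber_expect (fun _ => 1) = 1.
Proof.
rewrite /ber_expect; under eq_bigr do rewrite mulr1.
rewrite /ber_prob -(bigA_distr_bigA (fun i b => if b then p i else 1 - p i)) /=.
by apply: big1 => i _; rewrite big_bool /= addrC subrK.
Qed.

Section FlipInvariant.

Variables (i : 'I_N) (H : outcome N -> R).
Hypothesis H_flip : forall w, H (flip i w) = H w.

Let S := \sum_(w : outcome N | w i) ber_prob_except i w * H w.

(* Reindexing by flip i shows that both halves of the split along w i are
   multiples of S, with weights p i and 1 - p i. *)
Lemma ber_expect_flip_invariant : ber_expect H = S.
Proof.
rewrite /ber_expect (bigID (fun w : outcome N => w i)) /=.
rewrite (eq_bigr (fun w : outcome N => p i * (ber_prob_except i w * H w))); last first.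
  by move=> w wi; rewrite (ber_probD1 i) wi mulrA.
rewrite [X in _ + X](eq_bigr (fun w : outcome N => (1 - p i) * (ber_prob_except i w * H w)));
  last by move=> w /negPf wi; rewrite (ber_probD1 i) wi mulrA.
rewrite -!mulr_sumr sum_flip_invariant -/S; first ring.
by move=> w; rewrite ber_prob_except_flip H_flip.
Qed.

Lemma ber_expect_X_indep :
  ber_expect (fun w => ber_X s w i * H w) = p i * s i * ber_expect H.
Proof.
rewrite ber_expect_flip_invariant /ber_expect (bigID (fun w : outcome N => w i)) /=.
rewrite [X in _ + X]big1 ?addr0; last first.
  by move=> w /negPf wi; rewrite /ber_X wi mul0r mulr0.
rewrite /S mulr_sumr; apply: eq_bigr => w wi.
by rewrite (ber_probD1 i) /ber_X wi; ring.
Qed.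

End FlipInvariant.

Lemma expect_BE : expect_B p s = \sum_i p i * s i.
Proof.
rewrite /expect_B /ber_B.
under eq_bigr do rewrite mulr_sumr.
rewrite exchange_big /=; apply: eq_bigr => i _.
have := @ber_expect_X_indep i (fun _ => 1) (fun _ => erefl).
rewrite ber_expect1 mulr1 => <-.
by apply: eq_bigr => w _; rewrite mulr1.
Qed.

End Expectation.

Section RealBounds.

Variables (R : realFieldType) (N : nat) (p s : 'I_N -> R).
Hypothesis p01 : forall i, 0 <= p i <= 1.
Hypothesis s01 : forall i, 0 < s i <= 1.

Let ind (b : bool) : R := b%:R.

Lemma ber_X_01 w i : 0 <= ber_X s w i <= 1.
Proof.
rewrite /ber_X; case: (w i); last by rewrite lexx ler01.
by have /andP[/ltW -> ->] := s01 i.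
Qed.

Lemma ber_prob_ge0 w : 0 <= ber_prob p w.
Proof.
apply: prodr_ge0 => i _; have /andP[p0 p1] := p01 i.
by case: (w i); rewrite ?subr_ge0.
Qed.

Lemma ber_mean_ge0 i : 0 <= p i * s i.
Proof. by have /andP[p0 _] := p01 i; have /andP[/ltW s0 _] := s01 i; rewrite mulr_ge0. Qed.

Lemma ber_expect_le f g : (forall w, f w <= g w) ->
  ber_expect p f <= ber_expect p g.
Proof. by move=> fg; apply: ler_sum => w _; rewrite ler_wpM2l ?ber_prob_ge0. Qed.

Lemma prob_B_gt1E : prob_B_gt1 p s = ber_expect p (fun w => ind (1 < ber_B s w)).
Proof.
rewrite /prob_B_gt1 big_mkcond; apply: eq_bigr => w _.
by rewrite /ind; case: ifP; rewrite ?mulr1 ?mulr0.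
Qed.

Lemma ber_B_pointwise_bound w :
  ber_B s w <= 1 + ind (1 < ber_B s w)
               + \sum_i ber_X s w i * ind (1 < ber_B_except s i w).
Proof.
have sum_ge0 : 0 <= \sum_i ber_X s w i * ind (1 < ber_B_except s i w).
  apply: sumr_ge0 => i _; have /andP[X0 _] := ber_X_01 w i.
  by rewrite mulr_ge0 ?ler0n.
case: (leP (ber_B s w) 1) => B1; first by rewrite /ind mulr0n in sum_ge0 *; lra.
rewrite /ind mulr1n -/ind; case: (leP (ber_B s w) 2) => B2; first lra.
suff -> : \sum_i ber_X s w i * ind (1 < ber_B_except s i w) = ber_B s w by lra.
apply: eq_bigr => i _; have /andP[_ X1] := ber_X_01 w i.
have := ber_BD1 s i w => BD1.
have -> : 1 < ber_B_except s i w by lra.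
by rewrite /ind mulr1n mulr1.
Qed.

Lemma ind_B_except_gt1_le i w :
  ind (1 < ber_B_except s i w) <= ind (1 < ber_B s w).
Proof.
have /andP[X0 _] := ber_X_01 w i; have := ber_BD1 s i w.
rewrite /ind; case: ltrP => [Bi1|_] BD1; last by rewrite ler0n.
by have -> : 1 < ber_B s w by lra.
Qed.

Lemma expect_B_self_bound :
  expect_B p s <= 1 + prob_B_gt1 p s + expect_B p s * prob_B_gt1 p s.
Proof.
rewrite {1}/expect_B -/(ber_expect p (ber_B s)).
apply: le_trans (ber_expect_le ber_B_pointwise_bound) _.
rewrite /ber_expect; under eq_bigr do rewrite !mulrDr.
rewrite !big_split /= -/(ber_expect p (fun _ => 1)) ber_expect1.
rewrite -/(ber_expect p (fun w => ind (1 < ber_B s w))) -prob_B_gt1E lerD2l.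
under eq_bigr do rewrite mulr_sumr.
rewrite exchange_big expect_BE mulr_suml /=; apply: ler_sum => i _.
rewrite -/(ber_expect p (fun w => ber_X s w i * ind (1 < ber_B_except s i w))).
rewrite (ber_expect_X_indep p s (H := fun w => ind (1 < ber_B_except s i w)));
  last by move=> w; rewrite ber_B_except_flip.
rewrite ler_wpM2l ?ber_mean_ge0 // prob_B_gt1E.
exact: ber_expect_le (ind_B_except_gt1_le i).
Qed.

End RealBounds.

Lemma le_ratio_of_self_bound (R : realFieldType) (mu q alpha : R) :
  0 <= mu -> q <= alpha -> alpha < 1 -> mu <= 1 + q + mu * q ->
  mu <= (1 + alpha) / (1 - alpha).
Proof.
move=> mu0 qa a1 bound; rewrite ler_pdivlMr ?subr_gt0 //.
nra.
Qed.

Theorem lemma5 (R : realFieldType) (N : nat) (alpha : R) (p s : 'I_N -> R) :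
  0 <= alpha -> alpha < 1 ->
  (forall i, 0 <= p i <= 1) ->
  (forall i, 0 < s i <= 1) ->
  prob_B_gt1 p s <= alpha ->
  expect_B p s <= (1 + alpha) / (1 - alpha).
Proof.
move=> _ alpha1 p01 s01 q_alpha.
apply: le_ratio_of_self_bound q_alpha alpha1 (expect_B_self_bound p01 s01).
by rewrite expect_BE; apply: sumr_ge0 => i _; apply: ber_mean_ge0.
Qed.
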